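(* Let $R$ be a commutative unital ring, $G$ a group and $(\mathcal B_1,\Phi_1)\subseteq(\mathcal B_2,\Phi_2)$ a partial subaction of $G$ on generalized Boolean algebras with $\Phi_k=(\{\mathcal I_{k,t}\},\{\phi_{k,t}\})$, and let $A_k=\mathrm{Lc}(R,\mathcal B_k)\rtimes_{\Phi_k}G$, with $A_1\subseteq A_2$. Suppose $\mathcal B_1$ is an ideal of $\mathcal B_2$, and suppose $C_1$ is a cover of $\mathcal B_1$ and, for each $g\in G$, $C_g$ is a cover of $\mathcal I_{2,g}$, such that for all $g\in G$, $X,Y\in C_1$ and $V\in C_{g^{-1}}$ there exists $Z\in\mathcal I_{1,g}$ with $X\cap\phi_{2,g}(Y\cap V)\le Z$. Then for every $U\in\mathcal B_1$, $(U\delta_e)A_1(U\delta_e)=(U\delta_e)A_2(U\delta_e)$.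
   Context: A generalized Boolean algebra is a distributive relatively complemented lattice with least element $0$; an ideal is a subset closed under finite joins and under meets with arbitrary elements; a cover of $\mathcal B$ (or of an ideal $\mathcal I$) is a subset $C$ such that every element is $\le$ a finite join of elements of $C$. A partial action $\Phi$ of $G$ on $\mathcal B$: ideals $\mathcal I_t$ and isomorphisms $\phi_t:\mathcal I_{t^{-1}}\to\mathcal I_t$ with $\mathcal I_e=\mathcal B$, $\phi_e=\mathrm{id}$, $\phi_s(\mathcal I_{s^{-1}}\cap\mathcal I_t)=\mathcal I_s\cap\mathcal I_{st}$, $\phi_s\phi_t=\phi_{st}$ where defined. A partial subaction: $\mathcal B_1\subseteq\mathcal B_2$ sub generalized Boolean algebra, $\mathcal I_{1,t}\subseteq\mathcal I_{2,t}$, $\phi_{2,t}$ restricting to $\phi_{1,t}$. $\mathrm{Lc}(R,\mathcal B)$ is the algebra of locally constant compactly supported $R$-valued functions on the Stone space of $\mathcal B$, spanned by idempotents $1_U$; $\mathrm{Lc}(R,\mathcal B)\rtimes_\Phi G=\bigoplus_g\mathrm{Lc}(R,\mathcal I_g)\delta_g$ with $U\delta_g:=1_U\delta_g$ and $(U\delta_g)(V\delta_h)=\phi_g(\phi_{g^{-1}}(U)\cap V)\delta_{gh}$. $A_1$ is identified with the $R$-span of $\{U\delta_g:U\in\mathcal I_{1,g}\}$ in $A_2$. *)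

From HB Require Import structures.
From mathcomp Require Import all_boot all_order all_algebra.
From mathcomp Require Import monoid.
Set Implicit Arguments. Unset Strict Implicit. Unset Printing Implicit Defensive.
Import Order.TTheory GRing.Theory.

(* Generalized Boolean algebras are modelled by MathComp's
   cbDistrLatticeType: distributive lattices with bottom and relative
   (sectional) complements.  The ambient algebra B2 is the whole type T;
   sub generalized Boolean algebras, ideals and covers are predicates on T. *)

Section GBA.
Local Open Scope order_scope.
Context {disp : Order.disp_t} {T : cbDistrLatticeType disp}.

Definition sub_gba (S : pred T) : Prop :=
  [/\ S \bot, (forall x y, S x -> S y -> S (x `|` y)),
      (forall x y, S x -> S y -> S (x `&` y))
    & (forall x y, S x -> S y -> S (x `\` y))].

Definition ideal_in (S I : pred T) : Prop :=
  [/\ {subset I <= S}, I \bot, (forall x y, I x -> I y -> I (x `|` y))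
    & (forall x y, I x -> S y -> I (x `&` y))].

Definition iso_on (I J : pred T) (f : T -> T) : Prop :=
  [/\ (forall x, I x -> J (f x)),
      (forall x y, I x -> I y -> f x = f y -> x = y),
      (forall y, J y -> exists2 x, I x & f x = y),
      (forall x y, I x -> I y -> f (x `&` y) = f x `&` f y)
    & (forall x y, I x -> I y -> f (x `|` y) = f x `|` f y)].

Record partial_action (G : groupType) (S : pred T) (I : G -> pred T)
    (phi : G -> T -> T) : Prop := PartialAction {
  pa_ideal : forall t, ideal_in S (I t);
  pa_iso : forall t, iso_on (I (t^-1)%g) (I t) (phi t);
  pa_unit_dom : forall x, I 1%g x = S x;
  pa_unit : forall x, S x -> phi 1%g x = x;
  pa_dom : forall s t y,
    (I s y /\ I (s * t)%g y) <->
    (exists2 x, I (s^-1)%g x /\ I t x & phi s x = y);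
  pa_comp : forall s t x, I (t^-1)%g x -> I (s^-1)%g (phi t x) ->
    phi s (phi t x) = phi (s * t)%g x
}.

(* (B1, (I1, phi1)) is a partial subaction of (T, (I2, phi2)); the maps
   phi1 t are the restrictions of phi2 t, so we use phi2 for both *)
Definition partial_subaction (G : groupType) (B1 : pred T)
    (I1 I2 : G -> pred T) (phi2 : G -> T -> T) : Prop :=
  [/\ sub_gba B1, partial_action predT I2 phi2, partial_action B1 I1 phi2
    & (forall t x, I1 t x -> I2 t x)].

Definition is_cover (S C : pred T) : Prop :=
  {subset C <= S} /\
  forall x, S x -> exists2 s : seq T, all C s & x <= \join_(y <- s) y.

(* The Stone space of T: prime filters of T *)
Definition prime_filter (xi : T -> bool) : Prop :=
  [/\ (exists x, xi x), ~~ xi \bot,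
      (forall x y, xi x -> x <= y -> xi y),
      (forall x y, xi x -> xi y -> xi (x `&` y))
    & (forall x y, xi (x `|` y) -> xi x || xi y)].

Definition stone := {xi : T -> bool | prime_filter xi}.

End GBA.

Section Crossed.
Local Open Scope ring_scope.
Context {disp : Order.disp_t} {T : cbDistrLatticeType disp}.
Context (R : comNzRingType) (G : groupType) (phi : G -> T -> T).

(* formal R-linear combinations of generators  r (V delta_g)  are lists of
   triples (r, V, g) *)
Definition gterm := (R * T * G)%type.

(* (r V delta_g)(s W delta_h) = rs phi_g(phi_{g^-1}(V) /\ W) delta_{gh} *)
Definition gmul (a b : gterm) : gterm :=
  (a.1.1 * b.1.1, phi a.2 (Order.meet (phi (a.2^-1)%g a.1.2) b.1.2),
   (a.2 * b.2)%g).

Definition smul (l1 l2 : seq gterm) : seq gterm :=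
  [seq gmul a b | a <- l1, b <- l2].

(* the element of  Lc(R,T) x| G = (+)_g Lc(R, I_g) delta_g  represented by a
   formal combination: its g-component is the locally compact function on the
   Stone space xi |-> sum of r * 1_V(xi) over terms (r,V,g) *)
Definition geval (l : seq gterm) : G -> @stone _ T -> R :=
  fun g xi => \sum_(a <- l | a.2 == g) a.1.1 * ((proj1_sig xi) a.1.2)%:R.

(* the R-span A_I of { V delta_g : V in I g } *)
Definition in_span (I : G -> pred T) (l : seq gterm) : bool :=
  all (fun a => I a.2 a.1.2) l.

Definition corner (I : G -> pred T) (U : T) : (G -> @stone _ T -> R) -> Prop :=
  fun f => exists2 l : seq gterm, in_span I l &
    f = geval (smul (smul [:: (1%R, U, 1%g)] l) [:: (1%R, U, 1%g)]).

End Crossed.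

From HB Require Import structures.
From mathcomp Require Import all_boot all_order all_algebra.
From mathcomp Require Import monoid.
From Stdlib Require Import FunctionalExtensionality PropExtensionality.
Import Order.TTheory GRing.Theory.
Local Open Scope order_scope.

(* (U δ_e)(V δ_g)(U δ_e) = W δ_g with W := φ_g(φ_{g⁻¹}(U ∧ V) ∧ U), and
   this W is fixed by the same sandwiching.  So a corner element built from
   A_2 can be rebuilt term by term from the W's, provided each W lies in
   I_{1,g}.  For that, cover U by C_1 and φ_{g⁻¹}(U ∧ V) ∧ U by C_{g⁻¹}:
   distributing meets over the covering joins bounds W by finitely many
   X ∧ φ_g(Y ∧ V'), each below an element of I_{1,g}; as W ≤ U lies in
   the ideal B_1 and I_{1,g} is an ideal of B_1, W is in I_{1,g}. *)

Lemma leI_bigjoin {disp : Order.disp_t} {T : bDistrLatticeType disp}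
    [J K : Type] [s : seq J] [r : seq K] (F : J -> T) (H : K -> T) [x y : T] :
  x <= \join_(i <- s) F i -> y <= \join_(j <- r) H j ->
  x `&` y <= \join_(p <- [seq (i, j) | i <- s, j <- r]) (F p.1 `&` H p.2).
Proof.
move=> le_x le_y; apply: (le_trans (leI2 le_x le_y)).
have -> : (\join_(i <- s) F i) `&` (\join_(j <- r) H j) =
          \join_(i <- s) \join_(j <- r) (F i `&` H j).
  rewrite (big_morph (Order.meet^~ _) (fun a b => meetUl a b _) (meet0x _)).
  by apply: eq_bigr => i _; apply: (big_morph (Order.meet _) (meetUr _) (meetx0 _)).
by rewrite big_allpairs.
Qed.

Section Ideals.
Context {disp : Order.disp_t} {T : cbDistrLatticeType disp}.
Context {S I : pred T} (HI : ideal_in S I).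

Lemma ideal0 : I \bot.
Proof. by case: HI. Qed.

Lemma idealU {x y} : I x -> I y -> I (x `|` y).
Proof. by case: HI => _ _ + _; apply. Qed.

Lemma idealIr {x y} : I x -> S y -> I (x `&` y).
Proof. by case: HI => _ _ _; apply. Qed.

Lemma ideal_le {x y} : S x -> I y -> x <= y -> I x.
Proof. by move=> Sx Iy /meet_idPl <-; rewrite meetC; apply: idealIr. Qed.

Lemma ideal_bigjoin [J : eqType] [s : seq J] [F : J -> T] :
  (forall i, i \in s -> I (F i)) -> I (\join_(i <- s) F i).
Proof.
move=> IF; rewrite big_seq; apply: (big_ind I) => //; first exact: ideal0.
by move=> x y; apply: idealU.
Qed.

Lemma ideal_bounded_bigjoin [J : eqType] [s : seq J] [F : J -> T] :
  (forall i, i \in s -> exists2 Z, I Z & F i <= Z) ->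
  exists2 Z, I Z & \join_(i <- s) F i <= Z.
Proof.
move=> IF; rewrite big_seq; apply: (big_ind (fun x => exists2 Z, I Z & x <= Z)) => //.
  by exists \bot; rewrite ?ideal0.
move=> x y [Zx IZx le_x] [Zy IZy le_y]; exists (Zx `|` Zy); first exact: idealU.
exact: leU2.
Qed.

End Ideals.

Section PartialActionTheory.
Context {disp : Order.disp_t} {T : cbDistrLatticeType disp}.
Context {G : groupType} {I : G -> pred T} {phi : G -> T -> T}.
Hypothesis HA : partial_action predT I phi.

Lemma act1 x : phi 1%g x = x.
Proof. exact: (pa_unit HA). Qed.

Lemma dom_meetr t x y : I t x -> I t (x `&` y).
Proof. by move=> Ix; apply: (idealIr (pa_ideal HA t) Ix). Qed.

Lemma act_mem {t x} : I (t^-1)%g x -> I t (phi t x).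
Proof. by case: (pa_iso HA t) => + _ _ _ _; apply. Qed.

Lemma actI t x y :
  I (t^-1)%g x -> I (t^-1)%g y -> phi t (x `&` y) = phi t x `&` phi t y.
Proof. by case: (pa_iso HA t) => _ _ _ + _; apply. Qed.

Lemma actU t x y :
  I (t^-1)%g x -> I (t^-1)%g y -> phi t (x `|` y) = phi t x `|` phi t y.
Proof. by case: (pa_iso HA t) => _ _ _ _; apply. Qed.

Lemma act_le t x y : I (t^-1)%g y -> x <= y -> phi t x <= phi t y.
Proof.
move=> Iy le_xy; have Ix := ideal_le (pa_ideal HA _) isT Iy le_xy.
by move/meet_idPl: le_xy => <-; rewrite actI // leIr.
Qed.

Lemma act0 t : phi t \bot = \bot.
Proof.
have [x Ix phix0] := (let: And5 _ _ onto _ _ := pa_iso HA t in onto)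
  _ (ideal0 (pa_ideal HA t)).
by rewrite -{1}(meet0x x) actI ?(ideal0 (pa_ideal HA _)) // phix0 meetx0.
Qed.

Lemma act_bigjoin [t : G] [J : eqType] [s : seq J] [F : J -> T] :
  (forall i, i \in s -> I (t^-1)%g (F i)) ->
  phi t (\join_(i <- s) F i) = \join_(i <- s) phi t (F i).
Proof.
move=> IF; rewrite !big_seq.
pose K x y := I (t^-1)%g x /\ phi t x = y.
suff [] : K (\join_(i <- s | i \in s) F i) (\join_(i <- s | i \in s) phi t (F i)) by [].
apply: big_ind2 => [||i /IF //].
- by split; [apply: ideal0 (pa_ideal HA _) | apply: act0].
- move=> x1 x2 y1 y2 [Ix1 <-] [Iy1 <-].
  by split; [apply: (idealU (pa_ideal HA _) Ix1) | exact: actU].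
Qed.

Lemma actKV {t x} : I (t^-1)%g x -> phi (t^-1)%g (phi t x) = x.
Proof.
move=> Ix; have Itx : I (t^-1)^-1%g (phi t x) by rewrite invgK; apply: act_mem.
by rewrite (pa_comp HA Ix Itx) mulVg act1.
Qed.

Lemma actK {t x} : I t x -> phi t (phi (t^-1)%g x) = x.
Proof. by move=> Ix; rewrite -{1}(invgK t) actKV ?invgK. Qed.

End PartialActionTheory.

Section SandwichDef.
Context {disp : Order.disp_t} {T : cbDistrLatticeType disp} {G : groupType}.
Variables (phi : G -> T -> T) (U : T).

Definition sandwich_core g V := phi (g^-1)%g (U `&` V) `&` U.

Definition sandwich g V := phi g (sandwich_core g V).

End SandwichDef.

Section Sandwich.
Context {disp : Order.disp_t} {T : cbDistrLatticeType disp}.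
Context {G : groupType} {I : G -> pred T} {phi : G -> T -> T}.
Hypothesis HA : partial_action predT I phi.
Variable U : T.

Lemma sandwich_core_mem g V : I g V -> I (g^-1)%g (sandwich_core phi U g V).
Proof.
move=> IV; apply: (dom_meetr HA); apply: (act_mem HA); rewrite invgK meetC.
exact: (dom_meetr HA).
Qed.

Lemma sandwich_le g V : I g V -> sandwich phi U g V <= U.
Proof.
move=> IV; have IUV : I g (U `&` V) by rewrite meetC; apply: (dom_meetr HA).
apply: (le_trans _ (leIl U V)); rewrite -(actK HA IUV).
by apply: (act_le HA); [apply: (act_mem HA); rewrite invgK | apply: leIl].
Qed.

Lemma sandwichK g V : I g V -> sandwich phi U g (sandwich phi U g V) = sandwich phi U g V.
Proof.
move=> IV; rewrite {1}/sandwich /sandwich_core (meet_idPr (sandwich_le _ _ IV)).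
by rewrite (actKV HA) ?sandwich_core_mem // (meet_idPl (leIr _ _)).
Qed.

End Sandwich.

Section SandwichInSubaction.
Context {disp : Order.disp_t} {T : cbDistrLatticeType disp}.
Context {G : groupType} {B1 : pred T} {I1 I2 : G -> pred T} {phi : G -> T -> T}.
Hypotheses (HA : partial_action predT I2 phi) (HB1 : ideal_in predT B1).
Hypothesis HI1 : forall g, ideal_in B1 (I1 g).
Context {C1 : pred T} {C : G -> pred T}.
Hypotheses (HC1 : is_cover B1 C1) (HC : forall g, is_cover (I2 g) (C g)).
Hypothesis Hcov : forall (g : G) (X Y V : T), C1 X -> C1 Y -> C (g^-1)%g V ->
  exists2 Z, I1 g Z & X `&` phi g (Y `&` V) <= Z.

Lemma sandwich_mem U g V : B1 U -> I2 g V -> I1 g (sandwich phi U g V).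
Proof.
move=> B1U IV; set W := sandwich phi U g V.
have le_WU : W <= U := sandwich_le HA U g V IV.
have B1W : B1 W := ideal_le HB1 isT B1U le_WU.
suff [Z I1Z le_WZ] : exists2 Z, I1 g Z & W <= Z by apply: (ideal_le (HI1 g) B1W I1Z).
set Y := sandwich_core phi U g V.
have IY : I2 (g^-1)%g Y := sandwich_core_mem HA U g V IV.
have [s1 /allP s1C1 le_U] := HC1.2 U B1U.
have [s2 /allP s2C le_Y] := (HC (g^-1)%g).2 Y IY.
pose P := [seq (Y', V') | Y' <- s1, V' <- s2].
have P_dom p : p \in P -> I2 (g^-1)%g (p.1 `&` p.2).
  case/allpairsP => [[Y' V'] [_ /s2C /(HC _).1 IV' ->]] /=.
  by rewrite meetC; apply: (dom_meetr HA).
have le_YP : Y <= \join_(p <- P) (p.1 `&` p.2).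
  rewrite -[Y]meetxx; apply: (leI_bigjoin id id) => //.
  exact: le_trans (leIr _ _) le_U.
pose Q := [seq (X, p) | X <- s1, p <- P].
have Q_bounded q : q \in Q ->
    exists2 Z, I1 g Z & q.1 `&` phi g (q.2.1 `&` q.2.2) <= Z.
  case/allpairsP => [[X p] /= [/s1C1 C1X + ->]].
  case/allpairsP => [[Y' V'] /= [/s1C1 C1Y /s2C CV ->]].
  exact: Hcov.
have le_W : W <= \join_(q <- Q) (q.1 `&` phi g (q.2.1 `&` q.2.2)).
  rewrite -[W]meetxx; apply: (leI_bigjoin id (fun p => phi g (p.1 `&` p.2))).
    exact: le_trans le_WU le_U.
  rewrite -(act_bigjoin HA P_dom); apply: (act_le HA) le_YP.
  by apply: (ideal_bigjoin (pa_ideal HA _)) => p /P_dom.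
have [Z I1Z le_Z] := ideal_bounded_bigjoin (HI1 g) Q_bounded.
by exists Z; last exact: le_trans le_W le_Z.
Qed.

End SandwichInSubaction.

Section Corner.
Context {disp : Order.disp_t} {T : cbDistrLatticeType disp}.
Context {R : comNzRingType} {G : groupType} {phi : G -> T -> T}.

Lemma smul_sandwich (a b : @gterm _ T R G) (l : seq (@gterm _ T R G)) :
  smul phi (smul phi [:: a] l) [:: b] = [seq gmul phi (gmul phi a x) b | x <- l].
Proof. by rewrite /smul /= cats0; elim: l => //= x l ->. Qed.

Lemma sub_corner (I I' : G -> pred T) U f :
  (forall g x, I g x -> I' g x) -> corner (R:=R) phi I U f -> corner (R:=R) phi I' U f.
Proof.
move=> sII' [l /allP Il ->]; exists l => //.
by apply/allP => a /Il; apply: sII'.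
Qed.

Variables (I : G -> pred T) (U : T).
Hypothesis HA : partial_action predT I phi.

Lemma gmul_sandwich (a : @gterm _ T R G) :
  gmul phi (gmul phi (1%R, U, 1%g) a) (1%R, U, 1%g) =
  (a.1.1, sandwich phi U a.2 a.1.2, a.2).
Proof.
case: a => [[r V] g]; rewrite /gmul /sandwich /sandwich_core /=.
by rewrite invg1 !(act1 HA) mul1g mulg1 mul1r mulr1.
Qed.

Lemma corner_sandwich (I' : G -> pred T) f :
  (forall g V, I g V -> I' g (sandwich phi U g V)) ->
  corner (R:=R) phi I U f -> corner (R:=R) phi I' U f.
Proof.
move=> sandwich_I' [l /allP Il ->].
pose cut (a : @gterm _ T R G) := (a.1.1, sandwich phi U a.2 a.1.2, a.2).
exists (map cut l).
  by apply/allP => _ /mapP [a /Il Ia ->]; apply: sandwich_I'.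
rewrite !smul_sandwich -map_comp; congr geval; apply/eq_in_map => a /Il Ia /=.
by rewrite !gmul_sandwich /= (sandwichK HA).
Qed.

End Corner.

Theorem theorem4p7 (R : comNzRingType) (G : groupType)
  (disp : Order.disp_t) (T : cbDistrLatticeType disp)
  (B1 : pred T) (I1 I2 : G -> pred T) (phi2 : G -> T -> T)
  (Hsub : partial_subaction B1 I1 I2 phi2)
  (Hideal : ideal_in predT B1)
  (C1 : pred T) (C : G -> pred T)
  (HC1 : is_cover B1 C1)
  (HC : forall g, is_cover (I2 g) (C g))
  (Hcov : forall (g : G) (X Y V : T), C1 X -> C1 Y -> C (g^-1)%g V ->
     exists2 Z, I1 g Z & X `&` phi2 g (Y `&` V) <= Z) :
  forall U : T, B1 U -> @corner _ T R G phi2 I1 U = @corner _ T R G phi2 I2 U.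
Proof.
move=> U B1U; case: Hsub => _ HA HA1 sub_I12.
apply: functional_extensionality => f; apply: propositional_extensionality.
split; first exact: sub_corner.
apply: (corner_sandwich _ _ HA) => g V IV.
exact: (sandwich_mem HA Hideal (pa_ideal HA1) HC1 HC Hcov U g V B1U IV).
Qed.
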